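(* The Lie algebra $T^*\mathfrak{su}(2)$ has no 5-dimensional Lie subalgebra. Moreover, if $\mathfrak{h}$ is a 4-dimensional Lie subalgebra of $T^*\mathfrak{su}(2)$ which is degenerate with respect to the canonical quadratic form, then there exists an automorphism $F$ of $\mathfrak{su}(2)$ such that $T^*F(\mathfrak{h})=\mathbb{R}e_1\oplus\mathfrak{su}(2)^*$.
   Context: $(e_1,e_2,e_3)$ is the basis of $\mathfrak{su}(2)$ given by $e_1=\frac12\begin{pmatrix}0&i\\ i&0\end{pmatrix}$, $e_2=\frac12\begin{pmatrix}0&1\\-1&0\end{pmatrix}$, $e_3=\frac12\begin{pmatrix}-i&0\\0&i\end{pmatrix}$, with $[e_1,e_2]=e_3$, $[e_2,e_3]=e_1$, $[e_3,e_1]=e_2$. For a Lie algebra $\mathfrak{g}$, $T^*\mathfrak{g}=\mathfrak{g}\oplus\mathfrak{g}^*$ with bracket $[u+\alpha,v+\beta]=[u,v]+\mathrm{ad}_u^*\beta-\mathrm{ad}_v^*\alpha$, where $(\mathrm{ad}_u^*\alpha)(v)=-\alpha([u,v])$, and canonical quadratic form $\langle u+\alpha,v+\beta\rangle=\alpha(v)+\beta(u)$. For an automorphism $F$ of $\mathfrak{g}$, $T^*F$ is the automorphism $u+\alpha\mapsto F(u)+(F^{-1})^*\alpha$ of $T^*\mathfrak{g}$. A subspace is degenerate if the restriction of the form to it is degenerate. *)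

From HB Require Import structures.
From mathcomp Require Import all_boot all_order all_algebra.
From mathcomp Require Import reals.
Set Implicit Arguments. Unset Strict Implicit. Unset Printing Implicit Defensive.
Import Order.TTheory GRing.Theory Num.Theory.
Local Open Scope ring_scope.

Section TStar.
Variable R : realType.

Definition i0 : 'I_3 := @Ordinal 3 0 isT.
Definition i1 : 'I_3 := @Ordinal 3 1 isT.
Definition i2 : 'I_3 := @Ordinal 3 2 isT.

(* su(2) in coordinates w.r.t. the basis (e_1,e_2,e_3): u = u0 e1 + u1 e2 + u2 e3.
   Bracket = bilinear extension of [e1,e2]=e3, [e2,e3]=e1, [e3,e1]=e2. *)
Definition su2_br (u v : 'rV[R]_3) : 'rV[R]_3 :=
  \row_(k < 3)
    (if k == i0 then u 0 i1 * v 0 i2 - u 0 i2 * v 0 i1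
     else if k == i1 then u 0 i2 * v 0 i0 - u 0 i0 * v 0 i2
     else u 0 i0 * v 0 i1 - u 0 i1 * v 0 i0).

(* elements of su(2)^* in coordinates w.r.t. the dual basis; evaluation alpha(v) *)
Definition dual_eval (alpha v : 'rV[R]_3) : R := \sum_(i < 3) alpha 0 i * v 0 i.

(* basis vector e_(j+1) *)
Definition ebasis (j : 'I_3) : 'rV[R]_3 := delta_mx 0 j.

Definition coad (u alpha : 'rV[R]_3) : 'rV[R]_3 :=
  \row_(j < 3) (- dual_eval alpha (su2_br u (ebasis j))).

(* T^*su(2) = su(2) (+) su(2)^*, elements u + alpha written row_mx u alpha *)
Definition tstar_br (x y : 'rV[R]_(3 + 3)) : 'rV[R]_(3 + 3) :=
  let u := lsubmx x in let alpha := rsubmx x in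
  let v := lsubmx y in let beta := rsubmx y in
  row_mx (su2_br u v) (coad u beta - coad v alpha).

Definition tstar_form (x y : 'rV[R]_(3 + 3)) : R :=
  dual_eval (rsubmx x) (lsubmx y) + dual_eval (rsubmx y) (lsubmx x).

Definition is_lie_subalg (H : 'M[R]_(3 + 3)) : Prop :=
  forall x y : 'rV[R]_(3 + 3), (x <= H)%MS -> (y <= H)%MS -> (tstar_br x y <= H)%MS.

Definition degenerate (H : 'M[R]_(3 + 3)) : Prop :=
  exists x : 'rV[R]_(3 + 3), [/\ (x <= H)%MS, x != 0 &
    forall y, (y <= H)%MS -> tstar_form x y = 0].

Definition su2_aut (F : 'M[R]_3) : Prop :=
  F \in unitmx /\ forall u v, su2_br (u *m F) (v *m F) = su2_br u v *m F.

(* T^*F (u + alpha) = F(u) + (F^{-1})^* alpha, where ((F^{-1})^* alpha)(w) = alpha(F^{-1} w) *)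
Definition tstarF (F : 'M[R]_3) (x : 'rV[R]_(3 + 3)) : 'rV[R]_(3 + 3) :=
  row_mx (lsubmx x *m F)
         (\row_(j < 3) dual_eval (rsubmx x) (ebasis j *m invmx F)).

End TStar.

(* Identify su(2)^* with su(2) = (R^3, cross product) through the dual basis;
   then coad u = ad u, so [u + a, v + b] = [u,v] + ([u,b] - [v,a]).  For a
   Lie subalgebra H let U be its projection to su(2) (a subalgebra of su(2))
   and K = H /\ su(2)^*, so dim H = dim U + dim K.
   - su(2) has no 2-dimensional subalgebra: a plane n^perp contains the
     [e_k, n], and [[e_i,n],[e_j,n]] is a nonzero multiple of n for some i, j.
   - K is stable under [x, -] for x in H, i.e. under ad (lsubmx x).  If U is
     all of su(2) and K is not all of su(2)^*, then K lies in some plane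
     n^perp together with all [e_k, b], b in K, which forces K = 0
     (Lagrange's identity).
   Hence dim H >= 4 forces K = su(2)^* and dim U = dim H - 3, which rules out
   dim H = 5 and gives H = R u0 (+) su(2)^* when dim H = 4.  Finally two plane
   rotations (automorphisms of su(2)) send u0 to a multiple of e_1. *)
From HB Require Import structures.
From mathcomp Require Import all_boot all_order all_algebra.
From mathcomp Require Import reals.
From mathcomp Require Import ring zify.
Import Order.TTheory GRing.Theory Num.Theory.
Local Open Scope ring_scope.
Set Implicit Arguments. Unset Strict Implicit.

Section TStarSu2.
Variable R : realType.
Implicit Types (u v b n : 'rV[R]_3) (x y : 'rV[R]_(3 + 3)).

Lemma ord3_ind (P : 'I_3 -> Prop) : P i0 -> P i1 -> P i2 -> forall k, P k.
Proof.
move=> h0 h1 h2 [[|[|[|//]]] hk].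
- by have -> : Ordinal hk = i0 by apply: val_inj.
- by have -> : Ordinal hk = i1 by apply: val_inj.
- by have -> : Ordinal hk = i2 by apply: val_inj.
Qed.

Lemma row3P u v :
  u 0 i0 = v 0 i0 -> u 0 i1 = v 0 i1 -> u 0 i2 = v 0 i2 -> u = v.
Proof. by move=> h0 h1 h2; apply/rowP; elim/ord3_ind. Qed.

Lemma sum_ord3 (f : 'I_3 -> R) : \sum_(i < 3) f i = f i0 + f i1 + f i2.
Proof.
rewrite !big_ord_recr big_ord0 /= add0r.
by congr (f _ + f _ + f _); apply: val_inj.
Qed.

Lemma su2_br_i0 u v : su2_br u v 0 i0 = u 0 i1 * v 0 i2 - u 0 i2 * v 0 i1.
Proof. by rewrite mxE. Qed.
Lemma su2_br_i1 u v : su2_br u v 0 i1 = u 0 i2 * v 0 i0 - u 0 i0 * v 0 i2.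
Proof. by rewrite mxE. Qed.
Lemma su2_br_i2 u v : su2_br u v 0 i2 = u 0 i0 * v 0 i1 - u 0 i1 * v 0 i0.
Proof. by rewrite mxE. Qed.
Definition su2_brE := (su2_br_i0, su2_br_i1, su2_br_i2).

Lemma dual_evalE u v :
  dual_eval u v = u 0 i0 * v 0 i0 + u 0 i1 * v 0 i1 + u 0 i2 * v 0 i2.
Proof. by rewrite /dual_eval sum_ord3. Qed.

Lemma ebasisE j k : ebasis R j 0 k = (k == j)%:R.
Proof. by rewrite /ebasis mxE. Qed.

Lemma mulmx3E u (M : 'M[R]_3) j :
  (u *m M) 0 j = u 0 i0 * M i0 j + u 0 i1 * M i1 j + u 0 i2 * M i2 j.
Proof. by rewrite mxE sum_ord3. Qed.

Lemma su2_br0r u : su2_br u 0 = 0.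
Proof. by apply: row3P; rewrite !mxE; ring. Qed.
Lemma su2_br0l u : su2_br 0 u = 0.
Proof. by apply: row3P; rewrite !mxE; ring. Qed.

Definition sqnorm u : R := u 0 i0 ^+ 2 + u 0 i1 ^+ 2 + u 0 i2 ^+ 2.

Lemma sqr2_eq0 (a b : R) : (a ^+ 2 + b ^+ 2 == 0) = (a == 0) && (b == 0).
Proof. by rewrite paddr_eq0 ?sqr_ge0 // !sqrf_eq0. Qed.

Lemma sqnorm_eq0 u : (sqnorm u == 0) = (u == 0).
Proof.
rewrite /sqnorm paddr_eq0 ?addr_ge0 ?sqr_ge0 // sqr2_eq0 sqrf_eq0.
apply/idP/eqP => [/andP [/andP [/eqP h0 /eqP h1] /eqP h2] | ->].
  by apply: row3P; rewrite ?mxE.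
by rewrite !mxE eqxx.
Qed.

Lemma coad_su2_br u b : coad u b = su2_br u b.
Proof. by apply: row3P; rewrite !mxE !dual_evalE !su2_brE !ebasisE /=; ring. Qed.

Lemma tstar_brE x y : tstar_br x y =
  row_mx (su2_br (lsubmx x) (lsubmx y))
         (su2_br (lsubmx x) (rsubmx y) - su2_br (lsubmx y) (rsubmx x)).
Proof. by rewrite /tstar_br !coad_su2_br. Qed.

(* Lagrange's identity |b|^2 |n|^2 = (b.n)^2 + |b x n|^2, with the components
   of b x n written as n.[e_k, b]: a vector orthogonal to n whose brackets with
   all e_k are orthogonal to n vanishes. *)
Lemma perp_bracket_perp_eq0 b n : n != 0 -> dual_eval b n = 0 ->
  (forall k, dual_eval (su2_br (ebasis R k) b) n = 0) -> b = 0.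
Proof.
move=> nz hbn hk.
have lagrange : sqnorm b * sqnorm n =
   dual_eval b n ^+ 2 + dual_eval (su2_br (ebasis R i0) b) n ^+ 2
   + dual_eval (su2_br (ebasis R i1) b) n ^+ 2
   + dual_eval (su2_br (ebasis R i2) b) n ^+ 2.
  by rewrite /sqnorm !dual_evalE !su2_brE !ebasisE /=; ring.
move: lagrange; rewrite hbn !hk expr0n /= !addr0 => /eqP.
by rewrite mulf_eq0 !sqnorm_eq0 (negPf nz) orbF => /eqP.
Qed.

(* The plane n^perp is not a subalgebra: |n|^4 = sum_i n_i n.[[e_j,n],[e_k,n]]
   over cyclic (i,j,k). *)
Lemma plane_not_subalgebra n : n != 0 ->
  ~ (forall i j, dual_eval (su2_br (su2_br (ebasis R i) n)
                                   (su2_br (ebasis R j) n)) n = 0).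
Proof.
move=> nz h.
have id : sqnorm n ^+ 2 =
  n 0 i0 * dual_eval (su2_br (su2_br (ebasis R i1) n) (su2_br (ebasis R i2) n)) n
  + n 0 i1 * dual_eval (su2_br (su2_br (ebasis R i2) n) (su2_br (ebasis R i0) n)) n
  + n 0 i2 * dual_eval (su2_br (su2_br (ebasis R i0) n) (su2_br (ebasis R i1) n)) n.
  by rewrite /sqnorm !dual_evalE !su2_brE !ebasisE /=; ring.
move: id; rewrite !h !mulr0 !addr0 => /eqP.
by rewrite sqrf_eq0 sqnorm_eq0 (negPf nz).
Qed.

Lemma mul_tr_eq0 u n : (u *m n^T = 0) <-> dual_eval u n = 0.
Proof.
have dot : (u *m n^T) 0 0 = dual_eval u n.
  by rewrite mxE /dual_eval; apply: eq_bigr => i _; rewrite mxE.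
split => [h | h]; first by rewrite -dot h mxE.
by apply/rowP => i; rewrite (ord1 i) dot h mxE.
Qed.

Lemma normal_vector m (A : 'M[R]_(m, 3)) : (\rank A <= 2)%N ->
  exists2 n : 'rV[R]_3, n != 0 & A *m n^T = 0.
Proof.
move=> hA; have : kermx A^T != 0.
  by rewrite -mxrank_eq0 mxrank_ker mxrank_tr; apply/eqP; lia.
case/rowV0Pn => n /sub_kermxP hn nz; exists n => //.
by rewrite -[A]trmxK -trmx_mul hn trmx0.
Qed.

Definition mx33 (a b c d e f g h k : R) : 'M[R]_3 :=
  \matrix_(i < 3, j < 3)
    nth 0 (nth [::] [:: [:: a; b; c]; [:: d; e; f]; [:: g; h; k]] i) j.

Definition row3 (a b c : R) : 'rV[R]_3 := \row_(k < 3) [:: a; b; c]`_k.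

Lemma row3_eta u : u = row3 (u 0 i0) (u 0 i1) (u 0 i2).
Proof. by apply: row3P; rewrite mxE. Qed.

Definition rot_e3 (c s : R) := mx33 c (- s) 0 s c 0 0 0 1.
Definition rot_e2 (c s : R) := mx33 c 0 (- s) 0 1 0 s 0 c.

Lemma rot_e3_aut c s : c ^+ 2 + s ^+ 2 = 1 -> su2_aut (rot_e3 c s).
Proof.
move=> hcs; split.
  have [] // := @mulmx1_unit _ _ (rot_e3 c s) (rot_e3 c (- s)).
  apply/matrixP => i j; elim/ord3_ind: i; elim/ord3_ind: j;
    rewrite !mxE sum_ord3 !mxE /=; first [ring | rewrite -hcs; ring].
move=> u v; apply: row3P; rewrite !mulmx3E !su2_brE !mulmx3E !mxE /=;
  first [ring | rewrite -hcs; ring].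
Qed.

Lemma rot_e2_aut c s : c ^+ 2 + s ^+ 2 = 1 -> su2_aut (rot_e2 c s).
Proof.
move=> hcs; split.
  have [] // := @mulmx1_unit _ _ (rot_e2 c s) (rot_e2 c (- s)).
  apply/matrixP => i j; elim/ord3_ind: i; elim/ord3_ind: j;
    rewrite !mxE sum_ord3 !mxE /=; first [ring | rewrite -hcs; ring].
move=> u v; apply: row3P; rewrite !mulmx3E !su2_brE !mulmx3E !mxE /=;
  first [ring | rewrite -hcs; ring].
Qed.

Lemma mul_rot_e3 (p q w c s : R) :
  row3 p q w *m rot_e3 c s = row3 (p * c + q * s) (q * c - p * s) w.
Proof. by apply: row3P; rewrite !mulmx3E !mxE /=; ring. Qed.

Lemma mul_rot_e2 (p q w c s : R) :
  row3 p q w *m rot_e2 c s = row3 (p * c + w * s) q (w * c - p * s).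
Proof. by apply: row3P; rewrite !mulmx3E !mxE /=; ring. Qed.

Lemma su2_aut_mul (F G : 'M[R]_3) : su2_aut F -> su2_aut G -> su2_aut (F *m G).
Proof.
move=> [uF hF] [uG hG]; split; first by rewrite unitmx_mul uF uG.
by move=> u v; rewrite !mulmxA hG hF.
Qed.

Lemma polar_coords (a b : R) : exists c s : R,
  [/\ c ^+ 2 + s ^+ 2 = 1, a * c + b * s = Num.sqrt (a ^+ 2 + b ^+ 2)
    & b * c - a * s = 0].
Proof.
set r := Num.sqrt _.
have hr2 : r ^+ 2 = a ^+ 2 + b ^+ 2 by rewrite sqr_sqrtr // addr_ge0 ?sqr_ge0.
have [r0 | rn0] := eqVneq r 0.
  move: hr2; rewrite r0 expr0n /= => /esym/eqP; rewrite sqr2_eq0.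
  by case/andP => /eqP -> /eqP ->; exists 1, 0; split; ring.
exists (a / r), (b / r); split; last by field.
  by rewrite !expr_div_n -mulrDl -hr2 divff // expf_neq0.
have -> : a * (a / r) + b * (b / r) = r ^+ 2 / r by rewrite hr2; field.
by rewrite expr2 mulfK.
Qed.

Lemma rotate_to_e1 u0 : u0 != 0 ->
  exists F (lam : R), [/\ su2_aut F, lam != 0 & u0 *m F = lam *: ebasis R i0].
Proof.
move=> nz.
have [c1 [s1 [h1 e1 e1']]] := polar_coords (u0 0 i0) (u0 0 i1).
set r := Num.sqrt _ in e1.
have [c2 [s2 [h2 e2 e2']]] := polar_coords r (u0 0 i2).
exists (rot_e3 c1 s1 *m rot_e2 c2 s2), (Num.sqrt (r ^+ 2 + u0 0 i2 ^+ 2)).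
split; first by apply: su2_aut_mul; [apply: rot_e3_aut | apply: rot_e2_aut].
  rewrite sqr_sqrtr ?addr_ge0 ?sqr_ge0 // sqrtr_eq0 -ltNge lt0r.
  by rewrite -/(sqnorm u0) sqnorm_eq0 nz !addr_ge0 ?sqr_ge0.
rewrite mulmxA [u0]row3_eta mul_rot_e3 e1 e1' mul_rot_e2 e2 e2'.
by apply: row3P; rewrite !mxE /= ?mulr1 ?mulr0.
Qed.

Definition proj_su2 : 'M[R]_(3 + 3, 3) := col_mx 1%:M 0.
Definition proj_dual : 'M[R]_(3 + 3, 3) := col_mx 0 1%:M.

Lemma mul_proj_su2 x : x *m proj_su2 = lsubmx x.
Proof. by rewrite -{1}(hsubmxK x) mul_row_col mulmx1 mulmx0 addr0. Qed.

Lemma mul_proj_dual x : x *m proj_dual = rsubmx x.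
Proof. by rewrite -{1}(hsubmxK x) mul_row_col mulmx1 mulmx0 add0r. Qed.

Lemma rank_proj_su2 : \rank proj_su2 = 3%N.
Proof. by rewrite rank_col_mx0 mxrank1. Qed.

Section LieSubalgebra.
Variable H : 'M[R]_(3 + 3).
Hypothesis subH : is_lie_subalg H.

Let U := H *m proj_su2.
Let K := (H :&: kermx proj_su2)%MS.
Let Kd := K *m proj_dual.

Lemma rank_H_parts : (\rank U + \rank K)%N = \rank H.
Proof. exact: mxrank_mul_ker. Qed.

Lemma su2_partP u : (u <= U)%MS -> exists2 x, (x <= H)%MS & lsubmx x = u.
Proof.
case/submxP => D ->; exists (D *m H); first exact: submxMl.
by rewrite -mul_proj_su2 mulmxA.
Qed.

Lemma su2_part_sub x : (x <= H)%MS -> (lsubmx x <= U)%MS.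
Proof. by move=> hx; rewrite -mul_proj_su2 submxMr. Qed.

Lemma dual_part_sub b : (row_mx 0 b <= H)%MS -> (b <= Kd)%MS.
Proof.
move=> hb; rewrite -(row_mxKr (0 : 'rV[R]_3) b) -mul_proj_dual submxMr //.
rewrite sub_capmx hb; apply/sub_kermxP.
by rewrite mul_proj_su2 row_mxKl.
Qed.

Lemma dual_partP x : (x <= K)%MS -> (x <= H)%MS /\ x = row_mx 0 (rsubmx x).
Proof.
rewrite sub_capmx => /andP [hx /sub_kermxP]; rewrite mul_proj_su2 => hl.
by split => //; rewrite -hl hsubmxK.
Qed.

Lemma rank_dual_part : (\rank K <= 3)%N.
Proof.
have := mxrankS (capmxSr H (kermx proj_su2)).
by rewrite mxrank_ker rank_proj_su2.
Qed.

Lemma dual_part_full : \rank K = 3%N -> forall b, (row_mx 0 b <= H)%MS.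
Proof.
move=> hr b; have sK : (K <= kermx proj_su2)%MS by exact: capmxSr.
have : \rank K == \rank (kermx proj_su2) by rewrite mxrank_ker rank_proj_su2 hr.
rewrite (mxrank_leqif_eq sK).2 => /andP [_ sK'].
have hb : (row_mx 0 b <= kermx proj_su2)%MS.
  by apply/sub_kermxP; rewrite mul_proj_su2 row_mxKl.
exact: submx_trans (submx_trans hb sK') (capmxSl _ _).
Qed.

(* If U = su(2) then K is ad(su(2))-stable, hence trivial unless full. *)
Lemma dual_part_trivial : \rank U = 3%N -> (\rank K <= 2)%N -> \rank K = 0%N.
Proof.
move=> hU hK.
have [n nz hn] := normal_vector (leq_trans (mxrankM_maxl K proj_dual) hK).
have perp w : (w <= Kd)%MS -> dual_eval w n = 0.
  by case/submxP => D ->; apply/mul_tr_eq0; rewrite -mulmxA hn mulmx0.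
have fullU : row_full U by rewrite /row_full hU.
apply/eqP; rewrite mxrank_eq0; apply/rowV0P => v /dual_partP [vH ev].
suff hb : rsubmx v = 0 by rewrite ev hb row_mx0.
apply: (perp_bracket_perp_eq0 nz); first by apply/perp/dual_part_sub; rewrite -ev.
move=> k; apply/perp/dual_part_sub.
have [x xH hx] := su2_partP (submx_full (ebasis R k) fullU).
have := subH xH vH.
by rewrite tstar_brE hx ev row_mxKl row_mxKr su2_br0r su2_br0l subr0.
Qed.

Lemma rank_su2_part_neq2 : \rank U <> 2%N.
Proof.
move=> hU; have [n nz hn] := normal_vector (eq_leq hU).
have sUW : (U <= kermx n^T)%MS by apply/sub_kermxP.
have : \rank U == \rank (kermx n^T).
  by rewrite mxrank_ker mxrank_tr rank_rV nz hU.
rewrite (mxrank_leqif_eq sUW).2 => /andP [_ sWU].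
have inU k : (su2_br (ebasis R k) n <= U)%MS.
  apply: submx_trans sWU; apply/sub_kermxP/mul_tr_eq0.
  by rewrite !dual_evalE !su2_brE !ebasisE; ring.
apply: (plane_not_subalgebra nz) => i j.
have [x xH <-] := su2_partP (inU i); have [y yH <-] := su2_partP (inU j).
have := su2_part_sub (subH xH yH); rewrite tstar_brE row_mxKl.
by case/submxP => D ->; apply/mul_tr_eq0; rewrite -mulmxA hn mulmx0.
Qed.

Lemma big_subalg_parts : (4 <= \rank H)%N -> \rank K = 3%N /\ (\rank U + 3)%N = \rank H.
Proof.
move=> h4; have hrk := rank_H_parts; have hK := rank_dual_part.
have hU : (\rank U <= 3)%N := rank_leq_col U.
have [hK3 | hK3] := ltnP (\rank K) 3; last by split; lia.
have hU3 : \rank U = 3%N by have := rank_su2_part_neq2; lia.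
by have := dual_part_trivial hU3 hK3; lia.
Qed.

Lemma four_dim_subalg_shape : \rank H = 4%N -> exists2 u0 : 'rV[R]_3, u0 != 0 &
  forall x, (x <= H)%MS <-> exists (t : R) (beta : 'rV[R]_3), x = row_mx (t *: u0) beta.
Proof.
move=> h4; have [hK hr] := big_subalg_parts (eq_leq (esym h4)).
have hU : \rank U = 1%N by lia.
have : U != 0 by rewrite -mxrank_eq0 hU.
case/rowV0Pn => u0 u0U nz; exists u0 => // x.
have : \rank u0 == \rank U by rewrite rank_rV nz hU.
rewrite (mxrank_leqif_eq u0U).2 => /andP [_ Uu0].
split => [xH | [t [beta ->]]].
  have /sub_rVP [t ht] := submx_trans (su2_part_sub xH) Uu0.
  by exists t, (rsubmx x); rewrite -ht hsubmxK.
have [x0 x0H hx0] := su2_partP u0U.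
have -> : row_mx (t *: u0) beta = t *: x0 + row_mx 0 (beta - t *: rsubmx x0).
  by rewrite -{1}(hsubmxK x0) scale_row_mx add_row_mx hx0 addr0 addrC subrK.
by apply: addmx_sub; [apply: scalemx_sub | apply: dual_part_full].
Qed.

End LieSubalgebra.

Lemma tstarF_row_mx (F : 'M[R]_3) u b :
  tstarF F (row_mx u b) = row_mx (u *m F) (b *m (invmx F)^T).
Proof.
rewrite /tstarF row_mxKl row_mxKr; congr row_mx; apply/rowP => j.
by rewrite !mxE /dual_eval; apply: eq_bigr => i _; rewrite /ebasis -rowE !mxE.
Qed.

Lemma tstarF_line_image (F : 'M[R]_3) u0 (lam : R) :
  su2_aut F -> lam != 0 -> u0 *m F = lam *: ebasis R i0 -> forall y,
  (exists (t : R) (beta : 'rV[R]_3), y = tstarF F (row_mx (t *: u0) beta)) <->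
  (exists (a : R) (alpha : 'rV[R]_3), y = row_mx (a *: ebasis R i0) alpha).
Proof.
move=> [uF _] lnz eF y; split => [[t [beta ->]] | [a [alpha ->]]].
  exists (t * lam), (beta *m (invmx F)^T).
  by rewrite tstarF_row_mx -scalemxAl eF scalerA.
exists (a / lam), (alpha *m F^T).
rewrite tstarF_row_mx -scalemxAl eF scalerA divfK //.
by rewrite -mulmxA -trmx_mul mulVmx // trmx1 mulmx1.
Qed.

End TStarSu2.

Theorem mainTheorem12 (R : realType) :
  (forall H : 'M[R]_(3 + 3), is_lie_subalg H -> \rank H <> 5%N) /\
  (forall H : 'M[R]_(3 + 3), is_lie_subalg H -> \rank H = 4%N -> degenerate H ->
     exists F : 'M[R]_3, su2_aut F /\
       forall y : 'rV[R]_(3 + 3),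
         (exists x, (x <= H)%MS /\ y = tstarF F x) <->
         (exists (a : R) (alpha : 'rV[R]_3), y = row_mx (a *: ebasis R i0) alpha)).
Proof.
split => [H subH h5 | H subH h4 _].
  have h4 : (4 <= \rank H)%N by rewrite h5.
  have [_ hr] := big_subalg_parts subH h4.
  by apply: (rank_su2_part_neq2 subH); move: hr; rewrite h5; lia.
have [u0 nz shapeH] := four_dim_subalg_shape subH h4.
have [F [lam [autF lnz eF]]] := rotate_to_e1 nz.
exists F; split => // y; rewrite -(tstarF_line_image autF lnz eF).
split => [[x [/shapeH [t [beta ->]] ->]] | [t [beta ->]]]; first by exists t, beta.
by exists (row_mx (t *: u0) beta); split => //; apply/shapeH; exists t, beta.
Qed.
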